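(* The price of anarchy (supremum over all weights $w_1,w_2\ge0$ with $w_1+w_2>0$ and all instances, with respect to subgame-perfect equilibria) for sequential two-player weighted congestion games with affine costs and proportional cost functions is equal to $1.5$; for fixed weights, the price of anarchy equals $1.5$ if and only if $w_1=w_2$.
   Context: A weighted two-player congestion game with affine costs consists of a finite set $R$ of resources, coefficients $\alpha_r,\beta_r \geq 0$ for each $r\in R$, two players $i=1,2$ with weights $w_i\ge 0$, and for each player $i$ a nonempty finite set $\mathcal{A}_i \subseteq 2^R$ of actions. For an action profile $A=(A_1,A_2)$ the load of $r$ is $x_r(A)=\sum_{j:\, r\in A_j} w_j$. With proportional costs, player $i$ pays $C_i(A)=w_i\sum_{r\in A_i}(\alpha_r+\beta_r x_r(A))$. The social cost is $C(A)=C_1(A)+C_2(A)$. In the sequential game, player 1 chooses $A_1$ first, then player 2, knowing $A_1$, chooses $A_2$. A subgame-perfect equilibrium consists of a function $A_1\mapsto A_2^*(A_1)$ with $C_2(A_1,A_2^*(A_1))\le C_2(A_1,A_2)$ for all $A_1,A_2$, and an action $A_1^*$ with $C_1(A_1^*,A_2^*(A_1^* ))\le C_1(A_1,A_2^*(A_1))$ for all $A_1$; its outcome is $(A_1^*,A_2^*(A_1^* ))$. The price of anarchy of an instance is the maximum over subgame-perfect equilibrium outcomes $A$ of $C(A)/\min_{A'}C(A')$; the price of anarchy of a class (for fixed or arbitrary weights) is the supremum over all instances (with positive optimal social cost). *)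

From HB Require Import structures.
From mathcomp Require Import all_boot all_order all_algebra.
From mathcomp Require Import reals.
Set Implicit Arguments. Unset Strict Implicit. Unset Printing Implicit Defensive.
Import Order.TTheory GRing.Theory Num.Theory.
Local Open Scope ring_scope.

(* A weighted two-player congestion game instance with affine costs
   (weights are given separately). *)
Record game (R : realType) := Game {
  res : finType;
  alpha : res -> R;
  beta : res -> R;
  acts1 : {set {set res}};
  acts2 : {set {set res}};
  alpha_ge0 : forall r, 0 <= alpha r;
  beta_ge0 : forall r, 0 <= beta r;
  acts1_nonempty : acts1 != set0;
  acts2_nonempty : acts2 != set0 }.

Section Costs.
Variables (R : realType) (G : game R) (w1 w2 : R).

Definition load (S1 S2 : {set res G}) (r : res G) : R :=
  (if r \in S1 then w1 else 0) + (if r \in S2 then w2 else 0).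

Definition cost1 (S1 S2 : {set res G}) : R :=
  w1 * \sum_(r in S1) (alpha r + beta r * load S1 S2 r).
Definition cost2 (S1 S2 : {set res G}) : R :=
  w2 * \sum_(r in S2) (alpha r + beta r * load S1 S2 r).
Definition social (S1 S2 : {set res G}) : R := cost1 S1 S2 + cost2 S1 S2.

Definition spe_outcome (S1 S2 : {set res G}) : Prop :=
  exists f : {set res G} -> {set res G},
    (forall X, X \in acts1 G ->
       f X \in acts2 G /\
       forall Y, Y \in acts2 G -> cost2 X (f X) <= cost2 X Y) /\
    S1 \in acts1 G /\ S2 = f S1 /\
    (forall X, X \in acts1 G -> cost1 S1 (f S1) <= cost1 X (f X)).

Definition social_opt (O1 O2 : {set res G}) : Prop :=
  O1 \in acts1 G /\ O2 \in acts2 G /\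
  forall X Y, X \in acts1 G -> Y \in acts2 G -> social O1 O2 <= social X Y.
End Costs.

Arguments load {R} G w1 w2 S1 S2 r.
Arguments cost1 {R} G w1 w2 S1 S2.
Arguments cost2 {R} G w1 w2 S1 S2.
Arguments social {R} G w1 w2 S1 S2.
Arguments spe_outcome {R} G w1 w2 S1 S2.
Arguments social_opt {R} G w1 w2 O1 O2.

Definition poa_ratios (R : realType) (w1 w2 : R) : R -> Prop :=
  fun q => exists (G : game R) (S1 S2 O1 O2 : {set res G}),
    spe_outcome G w1 w2 S1 S2 /\ social_opt G w1 w2 O1 O2 /\
    0 < social G w1 w2 O1 O2 /\
    q = social G w1 w2 S1 S2 / social G w1 w2 O1 O2.

Definition poa_ratios_all (R : realType) : R -> Prop :=
  fun q => exists w1 w2 : R, 0 <= w1 /\ 0 <= w2 /\ 0 < w1 + w2 /\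
    poa_ratios w1 w2 q.

Definition is_supremum (R : realType) (S : R -> Prop) (x : R) : Prop :=
  (forall y, S y -> y <= x) /\
  (forall b, (forall y, S y -> y <= b) -> x <= b).

From Pilot Require Import Defs.
From HB Require Import structures.
From mathcomp Require Import all_boot all_order all_algebra.
From mathcomp Require Import reals.
From mathcomp Require Import ring lra.
Import Order.TTheory GRing.Theory Num.Theory.
Local Open Scope ring_scope.

(* Let (S1, f S1) be a subgame-perfect outcome, (O1, O2) an optimum, and
   B := f O1 the follower's answer to the leader playing O1.  Equilibrium gives
   C2(S1, f S1) <= C2(S1, B), C1(S1, f S1) <= C1(O1, B) and
   C2(O1, B) <= C2(O1, O2).  A resource-wise inequality weighing these three
   facts with D := w1^2 + w2^2 and w1 w2 yields D C(SPE) <= (D + w1 w2) C(OPT).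
   As 2 w1 w2 <= D, with equality iff w1 = w2, the ratio is at most 3/2, and
   strictly less for unequal weights.  A three-resource game with equal
   weights, in which the follower breaks a tie against the leader, attains
   3/2. *)

Section ExchangeInequality.
Variables (R : realType) (G : game R) (w1 w2 : R).
Hypotheses (w1_ge0 : 0 <= w1) (w2_ge0 : 0 <= w2).

Local Notation D := (w1 ^+ 2 + w2 ^+ 2).
Local Notation k := (w1 * w2).
Local Notation load := (load G w1 w2).
Local Notation cost1 := (cost1 G w1 w2).
Local Notation cost2 := (cost2 G w1 w2).

Definition res_cost1 (X Y : {set res G}) (r : res G) : R :=
  if r \in X then w1 * (alpha r + beta r * load X Y r) else 0.
Definition res_cost2 (X Y : {set res G}) (r : res G) : R :=
  if r \in Y then w2 * (alpha r + beta r * load X Y r) else 0.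

Lemma cost1E X Y : cost1 X Y = \sum_r res_cost1 X Y r.
Proof.
rewrite /cost1 big_mkcond mulr_sumr; apply: eq_bigr => r _.
by rewrite /res_cost1; case: ifP; rewrite ?mulr0.
Qed.

Lemma cost2E X Y : cost2 X Y = \sum_r res_cost2 X Y r.
Proof.
rewrite /cost2 big_mkcond mulr_sumr; apply: eq_bigr => r _.
by rewrite /res_cost2; case: ifP; rewrite ?mulr0.
Qed.

Lemma cost1_set1 r Y :
  cost1 [set r] Y =
    w1 * (alpha r + beta r * (w1 + (if r \in Y then w2 else 0))).
Proof. by rewrite /cost1 big_set1 /Defs.load inE eqxx. Qed.

Lemma cost2_set1 X r :
  cost2 X [set r] =
    w2 * (alpha r + beta r * ((if r \in X then w1 else 0) + w2)).
Proof. by rewrite /cost2 big_set1 /Defs.load inE eqxx. Qed.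

(* In each of the 32 membership patterns the difference of the two sides is
   w1 w2 (alpha (s1 w1 + b w2) + beta (s1 w1^2 + b w2^2 - D s1 b
   + s1 s2 w1 w2 + (D + w1 w2) o1 o2)), with s1 = [r \in S1], etc. *)
Lemma res_exchange_ineq S1 S2 O1 O2 B r :
  D * res_cost2 S1 B r <= k * res_cost1 S1 S2 r
    + (D + k) * (res_cost1 O1 O2 r - res_cost1 O1 B r + res_cost2 O1 B r).
Proof.
have a_ge0 := alpha_ge0 r; have b_ge0 := beta_ge0 r.
have mon_ge0 i j : 0 <= w1 ^+ i * w2 ^+ j by rewrite mulr_ge0 ?exprn_ge0.
have := mulr_ge0 a_ge0 (mon_ge0 2 1)%N; have := mulr_ge0 a_ge0 (mon_ge0 1 2)%N.
have := mulr_ge0 b_ge0 (mon_ge0 3 1)%N; have := mulr_ge0 b_ge0 (mon_ge0 2 2)%N.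
have := mulr_ge0 b_ge0 (mon_ge0 1 3)%N.
rewrite /res_cost1 /res_cost2 /Defs.load.
by case: (r \in S1) (r \in S2) (r \in O1) (r \in O2) (r \in B)
  => [] [] [] [] [] /=; lra.
Qed.

Lemma exchange_ineq S1 S2 O1 O2 B :
  D * cost2 S1 B <= k * cost1 S1 S2
    + (D + k) * (cost1 O1 O2 - cost1 O1 B + cost2 O1 B).
Proof.
rewrite !cost1E !cost2E -sumrB -big_split !mulr_sumr -big_split /=.
by apply: ler_sum => r _; apply: res_exchange_ineq.
Qed.

Lemma spe_social_le S1 S2 O1 O2 :
  spe_outcome G w1 w2 S1 S2 -> social_opt G w1 w2 O1 O2 ->
  D * social G w1 w2 S1 S2 <= (D + k) * social G w1 w2 O1 O2.
Proof.
move=> [f [f_br [S1_in [-> f_spe]]]] [O1_in [O2_in _]].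
have D_ge0 : 0 <= D by rewrite addr_ge0 ?sqr_ge0.
have Dk_ge0 : 0 <= D + k by rewrite addr_ge0 ?mulr_ge0.
have [fO1_in fO1_br] := f_br O1 O1_in.
have follower_S1 := ler_wpM2l D_ge0 ((f_br S1 S1_in).2 (f O1) fO1_in).
have leader := ler_wpM2l Dk_ge0 (f_spe O1 O1_in).
have follower_O1 := ler_wpM2l Dk_ge0 (fO1_br O2 O2_in).
have := exchange_ineq S1 (f S1) O1 O2 (f O1).
rewrite /social; lra.
Qed.

End ExchangeInequality.

Definition poa_bound {R : realFieldType} (w1 w2 : R) : R :=
  (w1 ^+ 2 + w2 ^+ 2 + w1 * w2) / (w1 ^+ 2 + w2 ^+ 2).

Lemma poa_ratio_le_bound {R : realType} (w1 w2 q : R) :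
  0 <= w1 -> 0 <= w2 -> 0 < w1 + w2 ->
  poa_ratios w1 w2 q -> q <= poa_bound w1 w2.
Proof.
move=> w1_ge0 w2_ge0 w_gt0 [G [S1 [S2 [O1 [O2 [spe [opt [opt_gt0 ->]]]]]]]].
have D_gt0 : 0 < w1 ^+ 2 + w2 ^+ 2.
  by have := mulr_gt0 w_gt0 w_gt0; have := sqr_ge0 (w1 - w2); nra.
rewrite ler_pdivlMr // mulrAC ler_pdivrMr // [leLHS]mulrC.
exact: spe_social_le.
Qed.

Lemma poa_bound_le3half {R : realFieldType} (w1 w2 : R) :
  poa_bound w1 w2 <= 3 / 2.
Proof.
rewrite /poa_bound; have [->|D_neq0] := eqVneq (w1 ^+ 2 + w2 ^+ 2) 0.
  by rewrite invr0 mulr0; lra.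
have D_gt0 : 0 < w1 ^+ 2 + w2 ^+ 2 by rewrite lt0r D_neq0 addr_ge0 ?sqr_ge0.
by rewrite ler_pdivrMr //; have := sqr_ge0 (w1 - w2); lra.
Qed.

Lemma poa_bound_ge3half_eq {R : realFieldType} (w1 w2 : R) :
  3 / 2 <= poa_bound w1 w2 -> w1 = w2.
Proof.
rewrite /poa_bound; have [->|D_neq0] := eqVneq (w1 ^+ 2 + w2 ^+ 2) 0.
  by rewrite invr0 mulr0; lra.
have D_gt0 : 0 < w1 ^+ 2 + w2 ^+ 2 by rewrite lt0r D_neq0 addr_ge0 ?sqr_ge0.
rewrite ler_pdivlMr // => le_32.
have : (w1 - w2) ^+ 2 <= 0 by lra.
by rewrite le_eqVlt ltNge sqr_ge0 orbF sqrf_eq0 subr_eq0 => /eqP.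
Qed.

Section TightInstance.
Variables (R : realType) (w : R).
Hypothesis w_gt0 : 0 < w.

(* Player 1 chooses between her own resource [r1] of cost [w] and the shared
   resource [rs], whose cost is its load; player 2 between her own resource
   [r2] of cost [2 w] and [rs].  After [rs] player 2 is indifferent, and
   answering with [r2] leaves player 1 indifferent too: social cost 3 w^2,
   against 2 w^2 for ([r1], [rs]). *)
Definition r1 : 'I_3 := @Ordinal 3 0 isT.
Definition r2 : 'I_3 := @Ordinal 3 1 isT.
Definition rs : 'I_3 := @Ordinal 3 2 isT.

Definition tight_alpha (r : 'I_3) : R := [:: w; 2 * w; 0]`_r.
Definition tight_beta (r : 'I_3) : R := [:: 0; 0; 1]`_r.

Lemma tight_alpha_ge0 r : 0 <= tight_alpha r.
Proof.
have w_ge0 := ltW w_gt0.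
by case: r => -[|[|[|m]]] i; rewrite /tight_alpha /= ?nth_nil; lra.
Qed.

Lemma tight_beta_ge0 r : 0 <= tight_beta r.
Proof. by case: r => -[|[|[|m]]] i; rewrite /tight_beta /= ?nth_nil; lra. Qed.

Lemma tight_acts1_neq0 : [set [set r1]; [set rs]] != set0.
Proof. by apply/set0Pn; exists [set r1]; rewrite set21. Qed.

Lemma tight_acts2_neq0 : [set [set r2]; [set rs]] != set0.
Proof. by apply/set0Pn; exists [set r2]; rewrite set21. Qed.

Definition tight_game : game R :=
  Game tight_alpha_ge0 tight_beta_ge0 tight_acts1_neq0 tight_acts2_neq0.

Definition tight_follower (X : {set 'I_3}) : {set 'I_3} :=
  if X == [set r1] then [set rs] else [set r2].

Lemma tight_spe : spe_outcome tight_game w w [set rs] [set r2].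
Proof.
have w2_gt0 := mulr_gt0 w_gt0 w_gt0.
have rs_neq_r1 : ([set rs] == [set r1]) = false by rewrite (inj_eq set1_inj).
exists tight_follower; rewrite /tight_follower.
split; [|split; [by rewrite set22 | split; [by rewrite rs_neq_r1 |]]].
  move=> X /set2P[]->; rewrite ?eqxx ?rs_neq_r1 ?set21 ?set22; split=> // Y;
    move=> /set2P[]->; rewrite !cost2_set1 !inE /= /tight_alpha /tight_beta /=;
    lra.
move=> X /set2P[]->; rewrite ?eqxx ?rs_neq_r1 !cost1_set1 !inE /=;
  by rewrite /tight_alpha /tight_beta /=; lra.
Qed.

Lemma tight_opt : social_opt tight_game w w [set r1] [set rs].
Proof.
have w2_gt0 := mulr_gt0 w_gt0 w_gt0.
split; [by rewrite set21 | split; [by rewrite set22 |]].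
move=> X Y /set2P[]-> /set2P[]->;
  rewrite /social !cost1_set1 !cost2_set1 !inE /=;
  by rewrite /tight_alpha /tight_beta /=; lra.
Qed.

Lemma tight_poa_ratio : poa_ratios w w (3 / 2).
Proof.
have w2_gt0 := mulr_gt0 w_gt0 w_gt0.
exists tight_game, [set rs], [set r2], [set r1], [set rs].
split; [exact: tight_spe | split; [exact: tight_opt |]].
rewrite /social !cost1_set1 !cost2_set1 !inE /= /tight_alpha /tight_beta /=.
by split; [lra | field; lra].
Qed.

End TightInstance.

Lemma is_supremum_max (R : realType) (S : R -> Prop) (x : R) :
  S x -> (forall y, S y -> y <= x) -> is_supremum S x.
Proof. by move=> Sx ub; split=> // b /(_ x Sx). Qed.

Theorem corollary6 (R : realType) :
  is_supremum (@poa_ratios_all R) (3 / 2) /\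
  (forall w1 w2 : R, 0 <= w1 -> 0 <= w2 -> 0 < w1 + w2 ->
     (is_supremum (poa_ratios w1 w2) (3 / 2) <-> w1 = w2)).
Proof.
have ratio_le w1 w2 q : 0 <= w1 -> 0 <= w2 -> 0 < w1 + w2 ->
    poa_ratios w1 w2 q -> q <= 3 / 2.
  move=> *; apply: (le_trans _ (poa_bound_le3half w1 w2)).
  exact: poa_ratio_le_bound.
split.
  apply: is_supremum_max => [|q [w1 [w2 [? [? [? ratio]]]]]].
    exists 1, 1; split; [exact: ler01 | split; [exact: ler01 | split]].
      exact: addr_gt0 ltr01 ltr01.
    exact: tight_poa_ratio ltr01.
  exact: ratio_le ratio.
move=> w1 w2 w1_ge0 w2_ge0 w_gt0; split=> [[_ least] | eq_w]; last subst w2.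
  by apply: poa_bound_ge3half_eq; apply: least => q; apply: poa_ratio_le_bound.
apply: is_supremum_max => [|q]; last exact: ratio_le.
by apply: tight_poa_ratio; lra.
Qed.
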